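(* Let $M=V^TV$ be an $n\times n$ positive semidefinite matrix of rank $d$, where $V\in\mathbb{R}^{d\times n}$ has columns $v_1,\dots,v_n$, and let $1\le j\le d$. Let $\mu$ be the optimal value (infimum) of the program \[ \text{minimize } \Delta_j(W)\quad\text{s.t. } v_i^TWv_i\le 1\ \ \forall 1\le i\le n,\quad W\succ 0 \] over $d\times d$ symmetric matrices $W$. Then $\mathrm{msd}_j(M)\le e^{\mu}$.
   Context: For a $d\times d$ matrix $W\succ 0$, $\Delta_j(W)\coloneqq-\sum_{i=1}^j\ln\lambda_i$, where $\lambda_1\le\dots\le\lambda_d$ are the eigenvalues of $W$ (minus the sum of logarithms of the $j$ smallest eigenvalues). $\mathrm{msd}_j(M)\coloneqq\max\{\det(M_{S,S}): S\subseteq[n],\ |S|=j\}$. *)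

From HB Require Import structures.
From Stdlib Require Import Reals ClassicalEpsilon FunctionalExtensionality.
From mathcomp Require Import all_boot all_order all_algebra.

Set Implicit Arguments.
Unset Strict Implicit.
Unset Printing Implicit Defensive.

HB.instance Definition _ := hasDecEq.Build R (compareP Req_EM_T).

Definition R_find (P : pred R) (n : nat) : option R :=
  match excluded_middle_informative (exists x, P x) with
  | left h => Some (proj1_sig (constructive_indefinite_description _ h))
  | right _ => None
  end.

Lemma R_find_correct (P : pred R) n x : R_find P n = Some x -> P x.
Proof.
rewrite /R_find; case: excluded_middle_informative => // h [<-].
exact: proj2_sig (constructive_indefinite_description _ h).
Qed.

Lemma R_find_complete (P : pred R) : (exists x, P x) -> exists n, R_find P n.
Proof.
move=> h; exists 0%N; rewrite /R_find.
by case: excluded_middle_informative.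
Qed.

Lemma R_find_ext (P Q : pred R) : P =1 Q -> R_find P =1 R_find Q.
Proof.
move=> PQ n; have -> : P = Q by apply: functional_extensionality.
by [].
Qed.

HB.instance Definition _ := hasChoice.Build R R_find_correct R_find_complete R_find_ext.

Lemma R_addA : associative Rplus. Proof. by move=> *; rewrite Rplus_assoc. Qed.
Lemma R_addC : commutative Rplus. Proof. exact: Rplus_comm. Qed.
Lemma R_add0 : left_id R0 Rplus. Proof. exact: Rplus_0_l. Qed.
Lemma R_addN : left_inverse R0 Ropp Rplus. Proof. exact: Rplus_opp_l. Qed.

HB.instance Definition _ := GRing.isZmodule.Build R R_addA R_addC R_add0 R_addN.

Lemma R_mulA : associative Rmult. Proof. by move=> *; rewrite Rmult_assoc. Qed.
Lemma R_mulC : commutative Rmult. Proof. exact: Rmult_comm. Qed.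
Lemma R_mul1 : left_id R1 Rmult. Proof. exact: Rmult_1_l. Qed.
Lemma R_mulDl : left_distributive Rmult Rplus. Proof. exact: Rmult_plus_distr_r. Qed.
Lemma R_oner_neq0 : R1 != R0. Proof. by apply/eqP; exact: R1_neq_R0. Qed.

HB.instance Definition _ :=
  GRing.Zmodule_isComNzRing.Build R R_mulA R_mulC R_mul1 R_mulDl R_oner_neq0.

Lemma R_mulVf (x : R) : x != R0 -> Rmult (Rinv x) x = R1.
Proof. by move/eqP=> h; exact: Rinv_l. Qed.

HB.instance Definition _ := GRing.ComNzRing_isField.Build R R_mulVf Rinv_0.

Local Open Scope ring_scope.

Definition Rleb (x y : R) : bool := if Rle_dec x y then true else false.

Definition posdef (d : nat) (W : 'M[R]_d) : Prop :=
  W^T = W /\ forall x : 'cV[R]_d, x != 0 -> Rlt 0 ((x^T *m W *m x) 0 0).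

Definition sorted_eigenvalues (d : nat) (W : 'M[R]_d) (s : seq R) : Prop :=
  size s = d /\ sorted Rleb s /\ char_poly W = \prod_(x <- s) ('X - x%:P).

Definition Delta (j d : nat) (W : 'M[R]_d) (x : R) : Prop :=
  exists s : seq R, sorted_eigenvalues W s /\
    x = Ropp (\sum_(i < j) ln (nth 0 s i)).

Definition principal_submx (n : nat) (M : 'M[R]_n) (S : {set 'I_n}) :
  'M[R]_#|S| := mxsub (@enum_val _ (mem S)) (@enum_val _ (mem S)) M.

(* msd_j(M) = max { det M_{S,S} : S subset of [n], |S| = j }
   (the default value 0 of the iterated max is only used when no such S
   exists, which never happens under the hypotheses j <= d <= n) *)
Definition msd (j n : nat) (M : 'M[R]_n) : R :=
  \big[Rmax/0]_(S : {set 'I_n} | #|S| == j) \det (principal_submx M S).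

Definition objective_values (j d n : nat) (V : 'M[R]_(d, n)) (x : R) : Prop :=
  exists W : 'M[R]_d, posdef W /\
    (forall i : 'I_n, Rle (((col i V)^T *m W *m col i V) 0 0) 1) /\
    Delta j W x.

Definition is_inf (E : R -> Prop) (m : R) : Prop :=
  (forall x, E x -> Rle m x) /\ (forall b, (forall x, E x -> Rle b x) -> Rle b m).

(* Let W be feasible with eigenvalues l_1 <= ... <= l_d, and let U = V_S collect the
   columns of V indexed by a j-set S.  Then
     l_1 ... l_j det (U^T U) <= det (U^T W U) <= prod_(i in S) v_i^T W v_i <= 1.
   The first inequality is proved by induction on d, deflating W along an eigenvector of
   l_1 with a Householder reflection and clearing the first row of U by a second
   reflection on the columns; the second is Hadamard's inequality for the form W, via
   Schur complements.  Thus det M_(S,S) <= exp (Delta_j W) for every feasible W, and the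
   bound passes to the infimum mu. *)

From HB Require Import structures.
From Stdlib Require Import Reals Lra.
From mathcomp Require Import all_boot all_order all_algebra.
Import GRing.Theory.
Local Open Scope ring_scope.

Set Implicit Arguments.
Unset Strict Implicit.
Unset Printing Implicit Defensive.

(* The ring operations on [R] are Stdlib's, which [lra] and [nra] only see once unfolded. *)
Ltac unfold_R_ops := repeat match goal with
 | |- context [@GRing.one ?T] => change (@GRing.one T) with R1
 | |- context [@Algebra.zero ?T] => change (@Algebra.zero T) with R0
 | |- context [@Algebra.add ?T ?x ?y] => change (@Algebra.add T x y) with (Rplus x y)
 | |- context [@GRing.mul ?T ?x ?y] => change (@GRing.mul T x y) with (Rmult x y)
 | |- context [@Algebra.opp ?T ?x] => change (@Algebra.opp T x) with (Ropp x)
 | |- context [@GRing.inv ?T ?x] => change (@GRing.inv T x) with (Rinv x)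
 end.

Lemma sumR_ge0 (I : Type) (r : seq I) (P : pred I) (F : I -> R) :
  (forall i, P i -> Rle 0 (F i)) -> Rle 0 (\sum_(i <- r | P i) F i).
Proof.
move=> F_ge0; apply: (big_ind (fun x : R => Rle 0 x)) => //.
- exact: Rle_refl.
- by move=> x y; unfold_R_ops; lra.
Qed.

Lemma prodR_gt0 (I : Type) (r : seq I) (P : pred I) (F : I -> R) :
  (forall i, P i -> Rlt 0 (F i)) -> Rlt 0 (\prod_(i <- r | P i) F i).
Proof.
move=> F_gt0; apply: (big_ind (fun x : R => Rlt 0 x)) => //.
- by unfold_R_ops; lra.
- by move=> x y; unfold_R_ops; nra.
Qed.

Lemma prodR_le1 (I : Type) (r : seq I) (P : pred I) (F : I -> R) :
  (forall i, P i -> Rle 0 (F i) /\ Rle (F i) 1) ->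
  Rle (\prod_(i <- r | P i) F i) 1.
Proof.
move=> F_01; suff [] : Rle 0 (\prod_(i <- r | P i) F i) /\
                       Rle (\prod_(i <- r | P i) F i) 1 by [].
apply: (big_ind (fun x : R => Rle 0 x /\ Rle x 1)) => //.
- by unfold_R_ops; lra.
- by move=> x y [? ?] [? ?]; unfold_R_ops; split; nra.
Qed.

Lemma prod_nth_gt0 (s : seq R) j : (forall y, y \in s -> Rlt 0 y) -> (j <= size s)%N ->
  Rlt 0 (\prod_(i < j) nth 0 s i).
Proof.
move=> s_gt0 j_le; apply: prodR_gt0 => i _.
by apply/s_gt0/mem_nth; apply: leq_trans j_le.
Qed.

Lemma exp_sum_ln (F : nat -> R) j : (forall i, (i < j)%N -> Rlt 0 (F i)) ->
  exp (\sum_(i < j) ln (F i)) = \prod_(i < j) F i.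
Proof.
elim: j => [|j IH] F_gt0; first by rewrite !big_ord0 exp_0.
rewrite !big_ord_recr /= -IH => [|i /leqW]; last exact: F_gt0.
by rewrite -[RHS]/(Rmult _ _) -[(_ + _)%R]/(Rplus _ _) exp_plus exp_ln //; exact: F_gt0.
Qed.

Lemma exp_neg_sum_ln j (s : seq R) :
  (forall y, y \in s -> Rlt 0 y) -> (j <= size s)%N ->
  exp (Ropp (\sum_(i < j) ln (nth 0 s i))) = Rinv (\prod_(i < j) nth 0 s i).
Proof.
move=> s_gt0 j_le; rewrite exp_Ropp exp_sum_ln // => i i_lt.
by apply/s_gt0/mem_nth/(leq_trans i_lt).
Qed.

Lemma le_exp_inf (E : R -> Prop) m c : is_inf E m ->
  (forall x, E x -> Rle c (exp x)) -> Rle c (exp m).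
Proof.
move=> [_ m_glb] c_le; have [c_le0|c_gt0] := Rle_or_lt c 0.
  by apply: Rle_trans c_le0 _; apply/Rlt_le/exp_pos.
have ln_le : Rle (ln c) m.
  apply: m_glb => x Ex; apply: Rnot_lt_le => x_lt.
  by have := exp_increasing _ _ x_lt; rewrite exp_ln //; have := c_le x Ex; lra.
rewrite -[c]exp_ln //; case: (Rle_lt_or_eq_dec _ _ ln_le) => [/exp_increasing|->].
  exact: Rlt_le.
exact: Rle_refl.
Qed.

Lemma RlebP x y : reflect (Rle x y) (Rleb x y).
Proof. by rewrite /Rleb; case: Rle_dec => h; constructor. Qed.

Lemma Rleb_trans : transitive Rleb.
Proof. by move=> y x z /RlebP xy /RlebP yz; apply/RlebP; lra. Qed.

Lemma sorted_head_le (l : R) s y : sorted Rleb (l :: s) -> y \in s -> Rle l y.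
Proof. by move=> /(order_path_min Rleb_trans)/allP ls /ls/RlebP. Qed.

Definition dot d (x y : 'cV[R]_d) : R := (x^T *m y) 0 0.
Definition qf d (A : 'M[R]_d) (x : 'cV[R]_d) : R := (x^T *m A *m x) 0 0.

Lemma dotE d (x y : 'cV[R]_d) : dot x y = \sum_i x i 0 * y i 0.
Proof. by rewrite /dot mxE; apply: eq_bigr => i _; rewrite mxE. Qed.

Lemma dotC d (x y : 'cV[R]_d) : dot x y = dot y x.
Proof. by rewrite !dotE; apply: eq_bigr => i _; rewrite mulrC. Qed.

Lemma dotBl d (x y z : 'cV[R]_d) : dot (x - y) z = dot x z - dot y z.
Proof. by rewrite !dotE -sumrB; apply: eq_bigr => i _; rewrite !mxE mulrBl. Qed.

Lemma dotZl d a (x y : 'cV[R]_d) : dot (a *: x) y = a * dot x y.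
Proof. by rewrite !dotE mulr_sumr; apply: eq_bigr => i _; rewrite !mxE mulrA. Qed.

Lemma mul_dot d (x y z : 'cV[R]_d) : x *m y^T *m z = dot y z *: x.
Proof. by rewrite -mulmxA [y^T *m z]mx11_scalar mul_mx_scalar. Qed.

Lemma dot_col_mx m n (x : 'cV[R]_m) (y : 'cV[R]_n) :
  dot (col_mx x y) (col_mx x y) = dot x x + dot y y.
Proof. by rewrite /dot tr_col_mx mul_row_col mxE. Qed.

Lemma dot_ge0 d (x : 'cV[R]_d) : Rle 0 (dot x x).
Proof. by rewrite dotE; apply: sumR_ge0 => i _; unfold_R_ops; nra. Qed.

Lemma dot_gt0 d (x : 'cV[R]_d) : x != 0 -> Rlt 0 (dot x x).
Proof.
move=> x_neq0.
have [k xk_neq0] : exists k, x k 0 != 0.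
  apply/existsP; apply: contraR x_neq0; rewrite negb_exists => /forallP x0.
  by apply/eqP/matrixP => i j; rewrite (ord1 j) mxE; apply/eqP/negbNE/x0.
rewrite dotE (bigD1 k) //=; set S := (X in (_ + X)%R).
have : Rle 0 S by apply: sumR_ge0 => i _; unfold_R_ops; nra.
have : Rlt 0 (Rmult (x k 0) (x k 0)) by apply/Rsqr_pos_lt/eqP.
by unfold_R_ops; lra.
Qed.

Lemma qf1 d (x : 'cV[R]_d) : qf 1%:M x = dot x x.
Proof. by rewrite /qf mulmx1. Qed.

Lemma qf_scalar d (l : R) (x : 'cV[R]_d) : qf l%:M x = l * dot x x.
Proof. by rewrite /qf /dot mul_mx_scalar -scalemxAl mxE. Qed.

Lemma qf_mul d j (A : 'M[R]_d) (U : 'M[R]_(d, j)) (x : 'cV[R]_j) :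
  qf A (U *m x) = qf (U^T *m A *m U) x.
Proof. by rewrite /qf trmx_mul !mulmxA. Qed.

Lemma qf_block_diag m n (A : 'M[R]_m) (B : 'M[R]_n) (x : 'cV[R]_m) (y : 'cV[R]_n) :
  qf (block_mx A 0 0 B) (col_mx x y) = qf A x + qf B y.
Proof. by rewrite /qf tr_col_mx mul_row_block !mulmx0 addr0 add0r mul_row_col mxE. Qed.

Lemma posdef1 d : posdef (1%:M : 'M[R]_d).
Proof. by split=> [|x /dot_gt0]; rewrite ?trmx1 -?/(qf _ _) ?qf1. Qed.

Lemma posdef_of_lower_bound d (A : 'M[R]_d) (m : R) : A^T = A -> Rlt 0 m ->
  (forall x, Rle (m * dot x x) (qf A x)) -> posdef A.
Proof.
move=> A_sym m_gt0 A_ge; split=> // x /dot_gt0 x_gt0.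
have := A_ge x; rewrite /qf; unfold_R_ops; nra.
Qed.

Section PosDef.
Variables (d : nat) (A : 'M[R]_d).
Hypothesis A_pd : posdef A.

Lemma qf_ge0 x : Rle 0 (qf A x).
Proof.
have [->|x_neq0] := eqVneq x 0; last exact/Rlt_le/A_pd.2.
by rewrite /qf mulmx0 mxE; apply: Rle_refl.
Qed.

Lemma qf_eq0 x : qf A x = 0 -> x = 0.
Proof.
move=> qx0; apply/eqP; apply: contraT => x_neq0.
by have := A_pd.2 x x_neq0; rewrite -/(qf A x) qx0 => /Rlt_irrefl.
Qed.

End PosDef.

Lemma det0_ker n (M : 'M[R]_n) : \det M = 0 -> exists2 x : 'cV[R]_n, x != 0 & M *m x = 0.
Proof.
rewrite -det_tr => /eqP/det0P [v v_neq0 vM0]; exists v^T; first by rewrite trmx_eq0.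
by rewrite -[M]trmxK -trmx_mul vM0 trmx0.
Qed.

Lemma gram_det_eq0 d j (A : 'M[R]_d) (U : 'M[R]_(d, j)) (x : 'cV[R]_j) :
  x != 0 -> U *m x = 0 -> \det (U^T *m A *m U) = 0.
Proof.
move=> x_neq0 Ux0; apply/eqP; rewrite -det_tr; apply/det0P; exists x^T.
  by rewrite trmx_eq0.
by rewrite -trmx_mul -!mulmxA Ux0 !mulmx0 trmx0.
Qed.

Lemma gram_det_eq0_ker d j (A : 'M[R]_d) (U : 'M[R]_(d, j)) : posdef A ->
  \det (U^T *m A *m U) = 0 -> exists2 x : 'cV[R]_j, x != 0 & U *m x = 0.
Proof.
move=> A_pd /det0_ker [x x_neq0 Gx0]; exists x => //.
by apply: (qf_eq0 A_pd); rewrite qf_mul /qf -mulmxA Gx0 mulmx0 mxE.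
Qed.

Lemma gram_det_eq0_posdef d j (A B : 'M[R]_d) (U : 'M[R]_(d, j)) :
  posdef A -> posdef B -> \det (U^T *m A *m U) = 0 -> \det (U^T *m B *m U) = 0.
Proof. by move=> A_pd _ /(gram_det_eq0_ker A_pd) [x x_neq0 /(gram_det_eq0 B x_neq0)]. Qed.

Lemma gram_det_row_mx_eq0 d j (A : 'M[R]_d) (c : 'cV[R]_d) (Z : 'M[R]_(d, j)) :
  posdef A -> \det (Z^T *m A *m Z) = 0 ->
  \det ((row_mx c Z)^T *m A *m row_mx c Z) = 0.
Proof.
move=> A_pd /(gram_det_eq0_ker A_pd) [x x_neq0 Zx0].
apply: (@gram_det_eq0 _ _ _ _ (col_mx 0 x)).
  by rewrite col_mx_eq0 negb_and x_neq0 orbT.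
by rewrite mul_row_col mulmx0 add0r Zx0.
Qed.

Lemma gram_det_colop d j (A : 'M[R]_d) (c : 'cV[R]_d) (Z : 'M[R]_(d, j)) (x : 'cV[R]_j) :
  \det ((row_mx c Z)^T *m A *m row_mx c Z) =
  \det ((row_mx (c - Z *m x) Z)^T *m A *m row_mx (c - Z *m x) Z).
Proof.
pose E : 'M[R]_(1 + j) := block_mx 1%:M 0 (- x) 1%:M.
have <- : row_mx c Z *m E = row_mx (c - Z *m x) Z.
  by rewrite mul_row_block !mulmx1 mulmx0 add0r mulmxN.
have detE : \det E = 1 by rewrite det_lblock !det1 mulr1.
set X := row_mx c Z; rewrite trmx_mul.
have -> : E^T *m X^T *m A *m (X *m E) = E^T *m (X^T *m A *m X) *m E by rewrite !mulmxA.
by rewrite !det_mulmx det_tr detE mulr1 mul1r.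
Qed.

(* Schur complement: [c - Z x] is the [A]-orthogonal projection of [c] off the columns of [Z]. *)
Lemma gram_det_schur d j (A : 'M[R]_d) (c : 'cV[R]_d) (Z : 'M[R]_(d, j)) :
  A^T = A -> \det (Z^T *m A *m Z) != 0 ->
  exists x : 'cV[R]_j,
    \det ((row_mx c Z)^T *m A *m row_mx c Z) = qf A (c - Z *m x) * \det (Z^T *m A *m Z)
    /\ qf A c = qf A (c - Z *m x) + qf A (Z *m x).
Proof.
move=> A_sym; set G := Z^T *m A *m Z => G_neq0.
have G_unit : G \in unitmx by rewrite unitmxE unitfE.
set x := invmx G *m (Z^T *m A *m c); exists x; set w := c - Z *m x.
have Zw : Z^T *m A *m w = 0.
  by rewrite /w mulmxBr !mulmxA -/G mulmxV // mul1mx subrr.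
have wZ : w^T *m A *m Z = 0.
  by apply: trmx_inj; rewrite !trmx_mul !trmxK A_sym mulmxA Zw trmx0.
split.
  rewrite (gram_det_colop _ _ _ x) -/w tr_row_mx mul_col_mx mul_col_row Zw wZ.
  by rewrite det_ublock det_mx11.
rewrite -{1}[c](subrK (Z *m x)) -/w; set z := Z *m x.
rewrite /qf mulmxDr [(w + z)^T]linearD /= !mulmxDl.
have -> : w^T *m A *m z = 0 by rewrite mulmxA wZ mul0mx.
have -> : z^T *m A *m w = 0 by rewrite trmx_mul -!mulmxA (mulmxA Z^T) Zw mulmx0.
by rewrite addr0 add0r mxE.
Qed.

Lemma col0_row_mx d j (c : 'cV[R]_d) (Z : 'M[R]_(d, j)) : col ord0 (row_mx c Z) = c.
Proof.
apply/matrixP => k l; rewrite (ord1 l) !mxE.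
by case: splitP => [i _|//]; rewrite (ord1 i).
Qed.

Lemma col_lift0_row_mx d j (c : 'cV[R]_d) (Z : 'M[R]_(d, j)) i :
  col (lift ord0 i) (row_mx c Z) = col i Z.
Proof. by rewrite -(colKr i c Z); congr col; apply: val_inj. Qed.

Section GramPosDef.
Variables (d : nat) (A : 'M[R]_d).
Hypothesis A_pd : posdef A.

Lemma gram_det_ge0 j (U : 'M[R]_(d, j)) : Rle 0 (\det (U^T *m A *m U)).
Proof.
elim: j U => [|j IH] U; first by rewrite det_mx00; unfold_R_ops; lra.
rewrite -[U](@hsubmxK _ _ 1 j); set c := lsubmx _; set Z := rsubmx _.
have [G0|G_neq0] := eqVneq (\det (Z^T *m A *m Z)) 0.
  by rewrite gram_det_row_mx_eq0 //; unfold_R_ops; lra.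
have [x [-> _]] := gram_det_schur c A_pd.1 G_neq0.
by have := qf_ge0 A_pd (c - Z *m x); have := IH Z; unfold_R_ops; nra.
Qed.

Lemma gram_det_row_mx_le j (c : 'cV[R]_d) (Z : 'M[R]_(d, j)) :
  Rle (\det ((row_mx c Z)^T *m A *m row_mx c Z)) (qf A c * \det (Z^T *m A *m Z)).
Proof.
have [G0|G_neq0] := eqVneq (\det (Z^T *m A *m Z)) 0.
  by rewrite G0 gram_det_row_mx_eq0 //; unfold_R_ops; rewrite Rmult_0_r; lra.
have [x [-> ->]] := gram_det_schur c A_pd.1 G_neq0.
have := qf_ge0 A_pd (Z *m x); have := qf_ge0 A_pd (c - Z *m x).
by have := gram_det_ge0 Z; unfold_R_ops; nra.
Qed.

Lemma hadamard_gram j (U : 'M[R]_(d, j)) :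
  Rle (\det (U^T *m A *m U)) (\prod_(i < j) qf A (col i U)).
Proof.
elim: j U => [|j IH] U; first by rewrite det_mx00 big_ord0; unfold_R_ops; lra.
rewrite -[U](@hsubmxK _ _ 1 j); set c := lsubmx _; set Z := rsubmx _.
rewrite big_ord_recl col0_row_mx; under eq_bigr do rewrite col_lift0_row_mx.
apply: Rle_trans (gram_det_row_mx_le c Z) _.
by apply: Rmult_le_compat_l; [apply: qf_ge0 | apply: IH].
Qed.

End GramPosDef.

Lemma det_conj_orth n (Q M : 'M[R]_n) : Q^T *m Q = 1%:M -> \det (Q^T *m M *m Q) = \det M.
Proof. by move=> QQ; rewrite !det_mulmx mulrAC -det_mulmx QQ det1 mul1r. Qed.

Lemma gram_det_mulmx_orth k m (A : 'M[R]_k) (V : 'M[R]_(k, m)) (Q : 'M[R]_m) :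
  Q^T *m Q = 1%:M -> \det ((V *m Q)^T *m A *m (V *m Q)) = \det (V^T *m A *m V).
Proof. by move=> QQ; rewrite -(det_conj_orth (V^T *m A *m V) QQ) trmx_mul !mulmxA. Qed.

Section Involution.
Variables (n : nat) (H : 'M[R]_n).
Hypotheses (H_sym : H^T = H) (HH : H *m H = 1%:M).

Lemma orth_involution : H^T *m H = 1%:M.
Proof. by rewrite H_sym. Qed.

Lemma dot_involution (x : 'cV[R]_n) : dot (H *m x) (H *m x) = dot x x.
Proof. by rewrite -!qf1 qf_mul mulmx1 orth_involution. Qed.

Lemma conj_involutionK (W B : 'M[R]_n) : H *m W *m H = B -> W = H^T *m B *m H.
Proof. by move=> <-; rewrite H_sym !mulmxA HH mul1mx -mulmxA HH mulmx1. Qed.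

End Involution.

Definition reflection d (w : 'cV[R]_d) : 'M[R]_d :=
  1%:M - (Rdiv 2 (dot w w)) *: (w *m w^T).

Lemma tr_reflection d (w : 'cV[R]_d) : (reflection w)^T = reflection w.
Proof. by rewrite /reflection linearB /= linearZ /= trmx1 trmx_mul trmxK. Qed.

Lemma reflectionK d (w : 'cV[R]_d) : w != 0 -> reflection w *m reflection w = 1%:M.
Proof.
move=> /dot_gt0 w_gt0; rewrite /reflection; set c := Rdiv 2 (dot w w).
have cc : c * c * dot w w = c + c.
  by change (Rmult (Rmult c c) (dot w w) = Rplus c c); rewrite /c; field; lra.
rewrite mulmxBl !mulmxBr !mul1mx !mulmx1 -scalemxAl -scalemxAr.
by rewrite mulmxA mul_dot -scalemxAl !scalerA mulrA cc scalerDl opprB addrK subrK.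
Qed.

Lemma reflection_swap d (u v : 'cV[R]_d) : dot u u = dot v v -> u != v ->
  reflection (v - u) *m v = u.
Proof.
move=> uv u_neq_v; rewrite /reflection; set w := v - u.
have w_gt0 : Rlt 0 (dot w w) by apply: dot_gt0; rewrite subr_eq0 eq_sym.
have ww : dot w w = dot w v + dot w v.
  rewrite {1}/w dotBl !(dotC _ w) /w !dotBl uv (dotC u v); unfold_R_ops; ring.
rewrite mulmxBl mul1mx -scalemxAl mul_dot scalerA.
have -> : Rdiv 2 (dot w w) * dot w v = 1.
  move: w_gt0; rewrite ww; unfold_R_ops => wv_gt0.
  by change (Rmult (Rdiv 2 (Rplus (dot w v) (dot w v))) (dot w v) = R1); field; lra.
by rewrite scale1r /w opprB addrC subrK.
Qed.

Lemma householder n (v : 'cV[R]_(1 + n)) :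
  exists H : 'M[R]_(1 + n), [/\ H^T = H, H *m H = 1%:M & dsubmx (H *m v) = 0].
Proof.
set u : 'cV[R]_(1 + n) := sqrt (dot v v) *: delta_mx 0 0.
have du : dsubmx u = 0 by apply/matrixP => i j; rewrite !mxE /= mulr0.
have [<-|u_neq_v] := eqVneq u v.
  by exists 1%:M; rewrite trmx1 mulmx1 mul1mx du.
exists (reflection (v - u)); rewrite tr_reflection reflectionK ?subr_eq0 1?eq_sym //.
rewrite reflection_swap //.
have e00 : dot (delta_mx 0 0 : 'cV[R]_(1 + n)) (delta_mx 0 0) = 1.
  by rewrite /dot trmx_delta mul_delta_mx mxE.
rewrite /u dotZl (dotC (delta_mx 0 0)) dotZl e00 mulr1.
by apply: sqrt_sqrt; apply: dot_ge0.
Qed.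

Lemma usubmx_rsubmx m1 m2 n1 n2 (M : 'M[R]_(m1 + m2, n1 + n2)) :
  usubmx (rsubmx M) = rsubmx (usubmx M).
Proof. by apply/matrixP => i k; rewrite !mxE. Qed.

Lemma reflection_clear_first_row n j (Y : 'M[R]_(1 + n, 1 + j)) :
  exists Hr : 'M[R]_(1 + j), [/\ Hr^T = Hr, Hr *m Hr = 1%:M &
    exists t (Z : 'M[R]_(n, j)), Y *m Hr = row_mx t (col_mx 0 Z)].
Proof.
have [Hr [Hr_sym HrHr Hr_clear]] := householder (usubmx Y)^T.
exists Hr; split=> //; exists (lsubmx (Y *m Hr)), (dsubmx (rsubmx (Y *m Hr))).
have top0 : usubmx (rsubmx (Y *m Hr)) = 0.
  rewrite usubmx_rsubmx -mul_usub_mx -[usubmx Y *m Hr]trmxK trmx_mul Hr_sym.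
  by rewrite -trmx_dsub Hr_clear trmx0.
by rewrite -top0 vsubmxK hsubmxK.
Qed.

Lemma char_poly_conj n (H W : 'M[R]_n) : H *m H = 1%:M ->
  char_poly (H *m W *m H) = char_poly W.
Proof.
move=> HH; rewrite /char_poly /char_poly_mx !map_mxM.
set P := map_mx polyC H; set Q := map_mx polyC W.
have PP : P *m P = 1%:M by rewrite -map_mxM HH map_mx1.
have -> : 'X%:M - P *m Q *m P = P *m ('X%:M - Q) *m P.
  rewrite mulmxBr mulmxBl; congr (_ - _).
  by rewrite -mulmxA -(scalar_mxC _ P) mulmxA PP mul1mx.
by rewrite !det_mulmx mulrC mulrA -det_mulmx PP det1 mul1r.
Qed.

Lemma char_poly_block_diag m n (A : 'M[R]_m) (B : 'M[R]_n) :
  char_poly (block_mx A 0 0 B) = char_poly A * char_poly B.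
Proof. by rewrite /char_poly char_block_diag_mx det_ublock. Qed.

Lemma char_poly_scalar1 (a : R) : char_poly (a%:M : 'M[R]_1) = 'X - a%:P.
Proof. by rewrite /char_poly det_mx11 !mxE eqxx !mulr1n. Qed.

(* Conjugating by a reflection that sends an eigenvector to the first basis vector. *)
Lemma symmetric_deflation n (W : 'M[R]_(1 + n)) l : W^T = W -> eigenvalue W l ->
  exists H (W' : 'M[R]_n),
    [/\ H^T = H, H *m H = 1%:M & H *m W *m H = block_mx l%:M 0 0 W'].
Proof.
move=> W_sym /eigenvalueP [v0 v0W v0_neq0]; set v := v0^T.
have Wv : W *m v = l *: v by rewrite /v -{1}W_sym -trmx_mul v0W linearZ.
have [H [HT HH Hv0]] := householder v; set W1 := H *m W *m H.
exists H, (drsubmx W1); split => //.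
have W1_sym : W1^T = W1 by rewrite /W1 !trmx_mul HT W_sym mulmxA.
set p := usubmx (H *m v).
have Hv : H *m v = col_mx p 0 by rewrite -Hv0 vsubmxK.
have p_neq0 : p 0 0 != 0.
  apply: contra v0_neq0 => /eqP p0; rewrite -trmx_eq0 -/v.
  by rewrite -[v]mul1mx -HH -mulmxA Hv [p]mx11_scalar p0 -scalemx1 scale0r col_mx0 mulmx0.
have W1Hv : W1 *m col_mx p 0 = l *: col_mx p 0.
  by rewrite -Hv /W1 -!mulmxA [H *m (H *m v)]mulmxA HH mul1mx Wv scalemxAr.
move: W1Hv; rewrite -[W1 in W1 *m _]submxK mul_block_col !mulmx0 !addr0.
rewrite scale_col_mx scaler0 [p]mx11_scalar !mul_mx_scalar scale_scalar_mx.
case/eq_col_mx; rewrite mulrC -scale_scalar_mx => /(scalerI p_neq0) ul /eqP.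
rewrite scaler_eq0 (negbTE p_neq0) /= => /eqP dl.
have ur : ursubmx W1 = 0 by rewrite -W1_sym -trmx_dlsub dl trmx0.
by rewrite -[LHS]submxK ul ur dl.
Qed.

Lemma sorted_eigenvalues_deflate n (W : 'M[R]_(1 + n)) l s :
  W^T = W -> sorted_eigenvalues W (l :: s) ->
  exists H (W' : 'M[R]_n),
    [/\ H^T = H, H *m H = 1%:M, H *m W *m H = block_mx l%:M 0 0 W',
        W'^T = W' & sorted_eigenvalues W' s].
Proof.
move=> W_sym [[size_s] [sorted_ls charW]].
have : eigenvalue W l by rewrite eigenvalue_root_char charW big_cons rootM root_XsubC eqxx.
case/(symmetric_deflation W_sym) => H [W' [HT HH HWH]].
exists H, W'; split => //.
  have : (H *m W *m H)^T = H *m W *m H by rewrite !trmx_mul HT W_sym mulmxA.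
  by rewrite HWH tr_block_mx => /eq_block_mx [_ _ _].
split => //; split; first exact: path_sorted sorted_ls.
have := char_poly_conj W HH; rewrite HWH char_poly_block_diag char_poly_scalar1.
by rewrite charW big_cons => /mulfI; apply; rewrite polyXsubC_eq0.
Qed.

Lemma posdef_eigenvalue_gt0 d (W : 'M[R]_d) s y :
  posdef W -> sorted_eigenvalues W s -> y \in s -> Rlt 0 y.
Proof.
move=> W_pd [_ [_ charW]] ys.
have : eigenvalue W y by rewrite eigenvalue_root_char charW root_prod_XsubC.
case/eigenvalueP => v vW v_neq0; rewrite -trmx_eq0 in v_neq0.
have := W_pd.2 _ v_neq0; rewrite trmxK vW -scalemxAl mxE.
by have := dot_gt0 v_neq0; rewrite /dot trmxK; unfold_R_ops; nra.
Qed.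

Lemma rayleigh_lower_bound d (W : 'M[R]_d) s m :
  W^T = W -> sorted_eigenvalues W s -> (forall y, y \in s -> Rle m y) ->
  forall x, Rle (m * dot x x) (qf W x).
Proof.
elim: d W s => [|d IH] W s W_sym.
  move=> _ _ x; rewrite [x]flatmx0 /dot /qf !mulmx0 mxE.
  by unfold_R_ops; rewrite Rmult_0_r; apply: Rle_refl.
case: s => [[]//|l s] W_s m_le x.
have [H [W' [H_sym HH HWH W'_sym W'_s]]] := sorted_eigenvalues_deflate W_sym W_s.
rewrite (conj_involutionK H_sym HH HWH) -qf_mul -(dot_involution H_sym HH x).
rewrite -[H *m x]vsubmxK qf_block_diag qf_scalar dot_col_mx.
have m_le_s y : y \in s -> Rle m y by move=> ys; apply: m_le; rewrite inE ys orbT.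
have := IH _ _ W'_sym W'_s m_le_s (dsubmx (H *m x)).
have := m_le l (mem_head l s); have := dot_ge0 (usubmx (H *m x)).
by unfold_R_ops; nra.
Qed.

Section DeflatedBlock.
Variables (n j : nat) (l p : R) (W' : 'M[R]_n).
Hypotheses (W'_sym : W'^T = W') (l_gt0 : Rlt 0 l) (p_ge0 : Rle 0 p).
Hypothesis W'_lb : forall x, Rle (l * dot x x) (qf W' x).
Let B : 'M[R]_(1 + n) := block_mx l%:M 0 0 W'.

Lemma deflated_block_sym : B^T = B.
Proof. by rewrite /B tr_block_mx tr_scalar_mx W'_sym !trmx0. Qed.

Lemma deflated_block_lb x : Rle (l * dot x x) (qf B x).
Proof.
rewrite -[x]vsubmxK qf_block_diag qf_scalar dot_col_mx.
by have := W'_lb (dsubmx x); unfold_R_ops; lra.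
Qed.

Lemma gram_det_deflated_block (t : 'cV[R]_(1 + n)) (Z : 'M[R]_(n, j)) :
  Rle (p * \det (Z^T *m Z)) (\det (Z^T *m W' *m Z)) ->
  Rle (l * p * \det ((row_mx t (col_mx 0 Z))^T *m row_mx t (col_mx 0 Z)))
      (\det ((row_mx t (col_mx 0 Z))^T *m B *m row_mx t (col_mx 0 Z))).
Proof.
move=> IH; set Z0 := col_mx 0 Z.
have B_pd := posdef_of_lower_bound deflated_block_sym l_gt0 deflated_block_lb.
have W'_pd := posdef_of_lower_bound W'_sym l_gt0 W'_lb.
have Z0BZ0 : Z0^T *m B *m Z0 = Z^T *m W' *m Z.
  rewrite /Z0 tr_col_mx mul_row_block trmx0 !mul0mx !mulmx0 !add0r.
  by rewrite mul_row_col mulmx0 add0r.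
have Z0Z0 : Z0^T *m 1%:M *m Z0 = Z^T *m Z.
  by rewrite /Z0 mulmx1 tr_col_mx mul_row_col trmx0 mul0mx add0r.
have -> : (row_mx t Z0)^T *m row_mx t Z0 = (row_mx t Z0)^T *m 1%:M *m row_mx t Z0.
  by rewrite mulmx1.
have [G0|G_neq0] := eqVneq (\det (Z^T *m W' *m Z)) 0.
  have := gram_det_eq0_posdef W'_pd (posdef1 n) G0; rewrite mulmx1 -Z0Z0.
  move=> /(gram_det_row_mx_eq0 t (posdef1 _)) ->.
  by have := gram_det_ge0 B_pd (row_mx t Z0); unfold_R_ops; rewrite Rmult_0_r.
rewrite -Z0BZ0 in G_neq0.
have [x [-> _]] := gram_det_schur t deflated_block_sym G_neq0.
rewrite Z0BZ0 (gram_det_colop _ _ _ x); set c := t - Z0 *m x.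
have := gram_det_row_mx_le (posdef1 _) c Z0; rewrite qf1 Z0Z0.
have := deflated_block_lb c; have := dot_ge0 c.
have := gram_det_ge0 (posdef1 n) Z; rewrite mulmx1.
move: IH; set G := \det (Z^T *m Z); set cc := dot c c; set q := qf B c.
unfold_R_ops => IH G_ge0 cc_ge0 q_ge gram_le.
apply: (Rle_trans _ (Rmult (Rmult l cc) (Rmult p G))).
  have -> : Rmult (Rmult l cc) (Rmult p G) = Rmult (Rmult l p) (Rmult cc G) by ring.
  by apply: Rmult_le_compat_l => //; nra.
apply: (Rle_trans _ (Rmult q (Rmult p G))); first by apply: Rmult_le_compat_r => //; nra.
by apply: Rmult_le_compat_l => //; nra.
Qed.

End DeflatedBlock.

Lemma gram_det_eigenvalue_bound d (W : 'M[R]_d) s :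
  W^T = W -> sorted_eigenvalues W s -> (forall y, y \in s -> Rlt 0 y) ->
  forall j (U : 'M[R]_(d, j)), (j <= d)%N ->
  Rle ((\prod_(i < j) nth 0 s i) * \det (U^T *m U)) (\det (U^T *m W *m U)).
Proof.
elim: d W s => [|d IH] W s W_sym W_s s_gt0 [|j] U //= j_le.
1,2: by rewrite big_ord0 !det_mx00; unfold_R_ops; lra.
case: s W_s s_gt0 => [[]//|l s] W_s s_gt0.
have [H [W' [H_sym HH HWH W'_sym W'_s]]] := sorted_eigenvalues_deflate W_sym W_s.
have l_gt0 : Rlt 0 l := s_gt0 l (mem_head l s).
have s'_gt0 y : y \in s -> Rlt 0 y by move=> ys; apply: s_gt0; rewrite inE ys orbT.
have W'_lb := rayleigh_lower_bound W'_sym W'_s (fun y => sorted_head_le W_s.2.1).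
have [Hr [Hr_sym HrHr [t [Z HUHr]]]] := reflection_clear_first_row (H *m U).
have H_orth := orth_involution H_sym HH.
have UWU : U^T *m W *m U = (H *m U)^T *m block_mx l%:M 0 0 W' *m (H *m U).
  by rewrite (conj_involutionK H_sym HH HWH) trmx_mul !mulmxA.
have UU : U^T *m U = (H *m U)^T *m 1%:M *m (H *m U).
  by rewrite mulmx1 trmx_mul mulmxA -(mulmxA U^T) H_orth mulmx1.
have Hr_orth := orth_involution Hr_sym HrHr.
rewrite UWU UU -(gram_det_mulmx_orth 1%:M _ Hr_orth).
rewrite -(gram_det_mulmx_orth (block_mx _ _ _ _) _ Hr_orth) HUHr mulmx1 big_ord_recl.
under eq_bigr do rewrite lift0 /=.
have size_s : size s = d by case: W'_s.
apply: gram_det_deflated_block => //; last exact: IH.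
by apply/Rlt_le/prod_nth_gt0; rewrite ?size_s.
Qed.

Lemma principal_submx_gram d n (V : 'M[R]_(d, n)) (S : {set 'I_n}) :
  principal_submx (V^T *m V) S = (colsub enum_val V)^T *m colsub enum_val V.
Proof. by rewrite /principal_submx mxsub_mul trmx_mxsub. Qed.

Lemma feasible_principal_minor_le d n (V : 'M[R]_(d, n)) (W : 'M[R]_d) s (S : {set 'I_n}) :
  posdef W -> sorted_eigenvalues W s ->
  (forall i, Rle (qf W (col i V)) 1) -> (#|S| <= d)%N ->
  Rle ((\prod_(i < #|S|) nth 0 s i) * \det (principal_submx (V^T *m V) S)) 1.
Proof.
move=> W_pd W_s V_feas S_le; rewrite principal_submx_gram; set U := colsub _ V.
have s_gt0 y := @posdef_eigenvalue_gt0 _ _ _ y W_pd W_s.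
apply: Rle_trans (gram_det_eigenvalue_bound W_pd.1 W_s s_gt0 U S_le) _.
apply: Rle_trans (hadamard_gram W_pd U) _.
by apply: prodR_le1 => i _; split; [apply: qf_ge0 | rewrite col_colsub].
Qed.

Lemma msd_le j n (M : 'M[R]_n) c : Rle 0 c ->
  (forall S : {set 'I_n}, #|S| = j -> Rle (\det (principal_submx M S)) c) ->
  Rle (msd j M) c.
Proof.
move=> c_ge0 minor_le; apply: (big_ind (fun x => Rle x c)) => //.
- by move=> x y; apply: Rmax_lub.
- by move=> S /eqP; apply: minor_le.
Qed.

Theorem lemma4p2 (d n j : nat) (V : 'M[R]_(d, n)) (mu : R) :
  \rank V = d ->
  (1 <= j <= d)%N ->
  is_inf (objective_values j V) mu ->
  Rle (msd j (V^T *m V)) (exp mu).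
Proof.
move=> _ /andP[_ j_le] mu_inf; apply: (le_exp_inf mu_inf).
move=> _ [W [W_pd [V_feas [s [W_s ->]]]]].
have s_gt0 y := @posdef_eigenvalue_gt0 _ _ _ y W_pd W_s.
have j_le_s : (j <= size s)%N by case: W_s => ->.
have P_gt0 := prod_nth_gt0 s_gt0 j_le_s.
rewrite exp_neg_sum_ln //; apply: msd_le => [|S S_j]; first exact/Rlt_le/Rinv_0_lt_compat.
have S_le : (#|S| <= d)%N by rewrite S_j.
have := feasible_principal_minor_le W_pd W_s V_feas S_le.
have -> : \prod_(i < #|S|) nth 0 s i = \prod_(i < j) nth 0 s i.
  by rewrite -!(big_mkord xpredT) S_j.
move=> minor_le; apply: (Rmult_le_reg_l _ _ _ P_gt0).
by rewrite Rinv_r //; apply: Rgt_not_eq.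
Qed.
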